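(* For all non-negative integers $m$ and $l$, $$\binom{m+l}{m}=\sum_{n=0}^{m}\frac{1}{2^{m+n}}\binom{m+n}{m}\binom{2l+m-n}{2l}.$$ *)

From mathcomp Require Import all_boot all_order all_algebra.

From mathcomp Require Import all_boot all_order all_algebra.
From mathcomp Require Import ring zify.
Import GRing.Theory Num.Theory.
Local Open Scope ring_scope.

(* For m, L : nat put  w(m,n) = C(m+n, m) / 2^(m+n)  and
     F(m, L) = sum_(n <= m) w(m,n) * C(L + m - n, L),
   so that the theorem reads  F(m, 2l) = C(m+l, m).  The proof, carried out
   over an arbitrary number field R (characteristic 0 is all that matters),
   has three parts.
   1. The weights of row m sum to 1: by Pascal's rule for w the row sums
      are independent of m, and the row sum for m = 0 is 1.  This is the
      case L = 0, since then every binomial factor C(m - n, 0) is 1.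
   2. Increasing L by 2 multiplies F by (2m + L + 2) / (L + 2): after
      multiplying by L + 1, the difference of the two sides is, termwise,
      a telescoping difference of the "flux"
        Phi(n) = 2n (L + m + 1 - n) w(m,n) C(L + m - n, L),
      which vanishes at n = 0 and at n = m + 1.
   3. Induction on l: F(m, 2l + 2) = (m + l + 1)/(l + 1) F(m, 2l), which is
      the recurrence of C(m + l, m) in l. *)

Lemma bin_pred_top (L t : nat) :
  ((L + t) * 'C((L + t).-1, L) = t * 'C(L + t, L))%N.
Proof. by rewrite mul_bin_down ssrnat.addKn. Qed.

Lemma bin_shift_diag2 (L t : nat) :
  (L.+2 * L.+1 * 'C(L.+2 + t, L.+2) = (L + t).+2 * (L + t).+1 * 'C(L + t, L))%N.
Proof.
have up1 := mul_bin_diag (L + t).+1 L.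
have up2 := mul_bin_diag (L + t).+2 L.+1.
rewrite /= in up1 up2.
rewrite !addSn -mulnA [(L.+1 * _)%N]mulnC mulnA -up2.
by rewrite -!mulnA [(_ * L.+1)%N]mulnC -up1.
Qed.

Section HalfBinomialSums.

Variable R : numFieldType.

Lemma natr_neq0 (n : nat) : (n.+1%:R : R) != 0.
Proof. by rewrite pnatr_eq0. Qed.

Definition weight (m n : nat) : R := (2 ^+ (m + n))^-1 * 'C(m + n, m)%:R.

Definition coef (m L n : nat) : R := 'C(L + m - n, L)%:R.

Definition hsum (m L : nat) : R := \sum_(0 <= n < m.+1) weight m n * coef m L n.

Lemma weight0 (m : nat) : weight m 0 = (2 ^+ m)^-1.
Proof. by rewrite /weight addn0 binn mulr1. Qed.

Lemma weight_pascal (m n : nat) :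
  weight m.+1 n.+1 = (weight m.+1 n + weight m n.+1) / 2.
Proof.
rewrite /weight addnS binS natrD !addSn -addnS exprS invfM.
by field; rewrite expf_neq0 ?natr_neq0.
Qed.

(* On the diagonal, symmetry of the binomial coefficient doubles Pascal's rule. *)
Lemma weight_diag (m : nat) : weight m.+1 m.+1 = weight m m.+1.
Proof.
rewrite /weight addnS binS addSn -addnS -bin_sub ?addnK; last by lia.
rewrite exprS invfM natrD.
by field; rewrite expf_neq0 ?natr_neq0.
Qed.

Lemma weight_succ (m n : nat) :
  (m + n.+1)%:R * weight m n = (n.+1 * 2)%:R * weight m n.+1.
Proof.
have bin_rel := bin_pred_top m n.+1; rewrite addnS /= in bin_rel.
rewrite /weight !addnS mulrCA -natrM bin_rel natrM exprS invfM.
by field; rewrite expf_neq0 ?natr_neq0.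
Qed.

(* The weights of every row sum to 1.  Writing T for the row sum at m + 1,
   Pascal's rule gives  T = w(m+1,0) + (T - w(m+1,m+1) + 1 - w(m,0) + w(m,m+1))/2,
   and the boundary values  w(m+1,0) = w(m,0)/2,  w(m+1,m+1) = w(m,m+1)  force T = 1. *)
Lemma weight_row_sum (m : nat) : \sum_(i < m.+1) weight m i = 1.
Proof.
elim: m => [|m IHm]; first by rewrite big_ord1 weight0 expr0 invr1.
set T := \sum_(i < m.+2) weight m.+1 i.
set U := \sum_(i < m.+1) weight m.+1 i.
have T_last : T = U + weight m m.+1 by rewrite /T big_ord_recr weight_diag.
have row_shift : \sum_(i < m.+1) weight m i.+1 = 1 - weight m 0 + weight m m.+1.
  by rewrite -IHm big_ord_recr /= big_ord_recl /=; ring.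
have T_pascal : T = weight m.+1 0 + (U + (1 - weight m 0 + weight m m.+1)) / 2.
  rewrite /T /U big_ord_recl -row_shift mulrDl !mulr_suml -big_split /=.
  by congr (_ + _); apply: eq_bigr => i _; rewrite weight_pascal mulrDl.
have T_minus : T - 1 = 2 * (T - (weight m.+1 0 + (U + (1 - weight m 0 + weight m m.+1)) / 2)).
  rewrite !T_last !weight0 exprS invfM.
  by field; rewrite expf_neq0 ?natr_neq0.
by apply/eqP; rewrite -subr_eq0 T_minus -T_pascal subrr mulr0.
Qed.

Lemma hsum_L0 (m : nat) : hsum m 0 = 1.
Proof.
rewrite /hsum big_mkord -[RHS](weight_row_sum m).
by apply: eq_bigr => i _; rewrite /coef bin0 mulr1.
Qed.

Definition flux (m L n : nat) : R :=
  (n * 2 * (L + m.+1 - n))%:R * weight m n * coef m L n.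

Lemma flux_succ (m L n : nat) : (n <= m)%N ->
  flux m L n.+1 = ((m - n) * (m + n).+1)%:R * weight m n * coef m L n.
Proof.
move=> le_nm; have [t ->] : exists t, m = (n + t)%N by exists (m - n)%N; lia.
rewrite /flux /coef.
have -> : (L + (n + t).+1 - n.+1 = L + t)%N by lia.
have -> : (L + (n + t) - n.+1 = (L + t).-1)%N by lia.
have -> : (L + (n + t) - n = L + t)%N by lia.
have -> : (n + t - n = t)%N by lia.
have coef_rel : (L + t)%:R * 'C((L + t).-1, L)%:R = t%:R * 'C(L + t, L)%:R :> R.
  by rewrite -!natrM bin_pred_top.
transitivity ((n.+1 * 2)%:R * weight (n + t) n.+1 * ((L + t)%:R * 'C((L + t).-1, L)%:R)).
  by rewrite !natrM; ring.
rewrite -weight_succ coef_rel addnS !natrM; ring.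
Qed.

Lemma hsum_term_step (m L n : nat) : (n <= m)%N ->
  L.+1%:R * (L.+2%:R * (weight m n * coef m L.+2 n)
             - (2 * m + L.+2)%:R * (weight m n * coef m L n))
  = flux m L n.+1 - flux m L n.
Proof.
move=> le_nm; rewrite flux_succ //.
have [t ->] : exists t, m = (n + t)%N by exists (m - n)%N; lia.
have shift := bin_shift_diag2 L t.
rewrite /flux /coef.
have -> : (L.+2 + (n + t) - n = L.+2 + t)%N by lia.
have -> : (L + (n + t) - n = L + t)%N by lia.
have -> : (L + (n + t).+1 - n = (L + t).+1)%N by lia.
have -> : (n + t - n = t)%N by lia.
transitivity (weight (n + t) n * (L.+2 * L.+1 * 'C(L.+2 + t, L.+2))%:R
  - L.+1%:R * (2 * (n + t) + L.+2)%:R * (weight (n + t) n * 'C(L + t, L)%:R)).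
  by rewrite !natrM; ring.
rewrite shift; ring.
Qed.

Lemma hsum_rec (m L : nat) :
  L.+2%:R * hsum m L.+2 = (2 * m + L.+2)%:R * hsum m L.
Proof.
apply/eqP; rewrite -subr_eq0 -(mulrI_eq0 _ (mulfI (natr_neq0 L))).
rewrite /hsum !mulr_sumr -sumrB mulr_sumr.
rewrite (telescope_sumr_eq (flux m L)) // => [|n /andP[_ lt_nm]].
  by rewrite flux_succ // /flux subnn !mul0n !mul0r subrr.
exact: hsum_term_step.
Qed.

Lemma hsum_even (m l : nat) : hsum m (2 * l) = 'C(m + l, m)%:R.
Proof.
elim: l => [|l IHl]; first by rewrite muln0 addn0 binn hsum_L0.
have bin_rel := bin_pred_top m l.+1; rewrite addnS /= in bin_rel.
apply: (mulfI (natr_neq0 (2 * l).+1)).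
rewrite mulnS add2n hsum_rec IHl.
apply: (mulfI (natr_neq0 l)).
transitivity ((2 * l).+2%:R * (l.+1 * 'C((m + l).+1, m))%:R : R).
  by rewrite -bin_rel; ring.
by rewrite addnS natrM; ring.
Qed.

End HalfBinomialSums.

Theorem mainTheorem3 (m l : nat) :
  ('C(m + l, m))%:R =
  \sum_(0 <= n < m.+1)
    ((2 ^+ (m + n))^-1 * ('C(m + n, m))%:R * ('C(2 * l + m - n, 2 * l))%:R : rat).
Proof. by rewrite -hsum_even. Qed.
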